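(* Let $R$ be the bracket algebra on six points, i.e. the subring of $\mathbb{C}[u_{ij}: 0\le i\le 3, 0\le j\le 5]$ generated by the $4\times4$ minors $[abcd]$ (columns $a,b,c,d$) of a generic $4\times 6$ matrix with columns labelled $0,\dots,5$. The symmetric group $\mathbb{S}_6$ acts on $R$ by permuting column labels, $\sigma([abcd])=[\sigma(a)\sigma(b)\sigma(c)\sigma(d)]$. Let $B=[0125][0234][1345]-[0124][2345][0135]$. Then the product $[0123][0145][2345]$ lies in the ideal of $R$ generated by $\{\sigma(B):\sigma\in\mathbb{S}_6\}$. In particular, if $0,\dots,5$ are points of $\mathbb{P}^3(\mathbb{C})$ with representative vectors such that the lines $01$, $23$, $45$ are mutually skew, then there is a permutation $\sigma$ of $\{0,\dots,5\}$ with $\sigma(B)\ne 0$ when evaluated at these vectors.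
   Context: $[abcd]$ denotes the determinant of the $4\times4$ matrix with columns the vectors labelled $a,b,c,d$. Lines $ab$ and $cd$ in $\mathbb{P}^3$ meet if and only if $[abcd]=0$. *)

From HB Require Import structures.
From mathcomp Require Import all_boot all_order all_algebra all_fingroup.
From mathcomp Require Import reals complex.
From mathcomp Require Import mpoly.
Set Implicit Arguments. Unset Strict Implicit. Unset Printing Implicit Defensive.
Import Order.TTheory GRing.Theory Num.Theory.
Local Open Scope ring_scope.

Definition CC (R : realType) : fieldType := (R[i])%C.

(* Polynomial ring C[u_ij : 0 <= i <= 3, 0 <= j <= 5]; the variable u_ij is
   'X_(mxvec_index i j), indexed by 'I_(4*6). *)
Definition PR (R : realType) := {mpoly CC R[4 * 6]}.

Definition genmx (R : realType) : 'M[PR R]_(4, 6) :=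
  \matrix_(i < 4, j < 6) 'X_(mxvec_index i j).

Definition bracket (R : realType) (a b c d : 'I_6) : PR R :=
  \det (\matrix_(i < 4, k < 4) genmx R i (tnth [tuple a; b; c; d] k)).

Inductive in_bracket_alg (R : realType) : PR R -> Prop :=
  | ba_bracket a b c d : in_bracket_alg (bracket R a b c d)
  | ba_const (z : CC R) : in_bracket_alg z%:MP
  | ba_add p q : in_bracket_alg p -> in_bracket_alg q -> in_bracket_alg (p + q)
  | ba_mul p q : in_bracket_alg p -> in_bracket_alg q -> in_bracket_alg (p * q).

Definition l0 : 'I_6 := inord 0.
Definition l1 : 'I_6 := inord 1.
Definition l2 : 'I_6 := inord 2.
Definition l3 : 'I_6 := inord 3.
Definition l4 : 'I_6 := inord 4.
Definition l5 : 'I_6 := inord 5.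

Definition sigmaB (R : realType) (s : 'S_6) : PR R :=
  bracket R (s l0) (s l1) (s l2) (s l5) * bracket R (s l0) (s l2) (s l3) (s l4)
    * bracket R (s l1) (s l3) (s l4) (s l5)
  - bracket R (s l0) (s l1) (s l2) (s l4) * bracket R (s l2) (s l3) (s l4) (s l5)
    * bracket R (s l0) (s l1) (s l3) (s l5).

(* Membership in the ideal of the bracket algebra generated by {sigma(B)}:
   a combination sum_sigma r_sigma * sigma(B) with all r_sigma in the
   bracket algebra (the generating set is finite, indexed by S_6). *)
Definition in_ideal_sigmaB (R : realType) (p : PR R) : Prop :=
  exists r : 'S_6 -> PR R,
    (forall s, in_bracket_alg (r s)) /\ p = \sum_(s : 'S_6) r s * sigmaB R s.

(* Evaluation of a polynomial at a 4 x 6 complex matrix M (u_ij := M i j);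
   the columns of M are the representative vectors of the six points. *)
Definition evalM (R : realType) (M : 'M[CC R]_(4, 6)) (p : PR R) : CC R :=
  p.@[fun k => mxvec M 0 k].

(* The line through the points a, b of P^3, as the row space of the 2 x 4
   matrix with rows the representative vectors a, b. *)
Definition linemx (R : realType) (M : 'M[CC R]_(4, 6)) (a b : 'I_6) : 'M[CC R]_(2, 4) :=
  \matrix_(k < 2, i < 4) M i (if k == ord0 then a else b).

Definition is_line (R : realType) (M : 'M[CC R]_(4, 6)) (a b : 'I_6) : Prop :=
  \rank (linemx M a b) = 2%N.

Definition skew_lines (R : realType) (M : 'M[CC R]_(4, 6)) (a b c d : 'I_6) : Prop :=
  is_line M a b /\ is_line M c d /\ (linemx M a b :&: linemx M c d)%MS = 0.

From Pilot Require Import Defs.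
From HB Require Import structures.
From mathcomp Require Import all_boot all_order all_algebra all_fingroup.
From mathcomp Require Import reals complex.
From mathcomp Require Import mpoly.
From mathcomp Require Import ring.
Set Implicit Arguments. Unset Strict Implicit. Unset Printing Implicit Defensive.
Import GRing.Theory Num.Theory.
Local Open Scope ring_scope.

(* The relabellings (34), (354), id and (45) of B fix 0, 1, 2, and after
   sorting the brackets the combination (34)B + (354)B - B - (45)B equals
   2[0123][0145][2345] + [2345]([0124][0135] - [0125][0134]).  By the
   three-term Grassmann-Pluecker relation among the brackets [01xy], the
   last summand is a third copy of [0123][0145][2345]; dividing by 3 puts
   the product in the ideal.  For the second part, evaluation at the six
   vectors kills the ideal if every sigma(B) vanishes, whereas two skew
   lines span C^4, so [0123], [0145] and [2345] are all nonzero. *)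

Section ExplicitDeterminant.
Variable T : comNzRingType.

(* Rows and columns are indexed by [nat] so that [ring] sees the entries of
   the cofactor expansion as syntactically comparable atoms. *)
Definition det3_expand (f : nat -> nat -> T) : T :=
  f 0%N 0%N * (f 1%N 1%N * f 2%N 2%N - f 1%N 2%N * f 2%N 1%N)
  - f 0%N 1%N * (f 1%N 0%N * f 2%N 2%N - f 1%N 2%N * f 2%N 0%N)
  + f 0%N 2%N * (f 1%N 0%N * f 2%N 1%N - f 1%N 1%N * f 2%N 0%N).

Definition det4_expand (f : nat -> nat -> T) : T :=
  f 0%N 0%N * det3_expand (fun i j => f i.+1 (bump 0 j))
  - f 0%N 1%N * det3_expand (fun i j => f i.+1 (bump 1 j))
  + f 0%N 2%N * det3_expand (fun i j => f i.+1 (bump 2 j))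
  - f 0%N 3%N * det3_expand (fun i j => f i.+1 (bump 3 j)).

Lemma det4_expandE (f : nat -> nat -> T) :
  \det (\matrix_(i < 4, j < 4) f i j) = det4_expand f.
Proof.
do 3 rewrite !(expand_det_row _ 0) !big_ord_recl !big_ord0 /cofactor.
rewrite !det_mx11 !mxE /= /det4_expand /det3_expand /bump /=.
ring.
Qed.

Definition det4 (x y z w : nat -> T) : T :=
  det4_expand (fun i k => match k with 0 => x i | 1 => y i | 2 => z i | _ => w i end%N).

Lemma det4_swap23 x y z w : det4 x z y w = - det4 x y z w.
Proof. rewrite /det4 /det4_expand /det3_expand /bump /=; ring. Qed.

Lemma det4_swap34 x y z w : det4 x y w z = - det4 x y z w.
Proof. rewrite /det4 /det4_expand /det3_expand /bump /=; ring. Qed.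

Lemma det4_Pluecker a b c d e f :
  det4 a b c d * det4 a b e f - det4 a b c e * det4 a b d f
  + det4 a b c f * det4 a b d e = 0.
Proof. rewrite /det4 /det4_expand /det3_expand /bump /=; ring. Qed.

End ExplicitDeterminant.

Section Minor4.
Variables (T : comNzRingType) (n : nat) (A : 'M[T]_(4, n)).

Definition minor4 (a b c d : 'I_n) : T :=
  \det (\matrix_(i < 4, k < 4) A i (tnth [tuple a; b; c; d] k)).

Lemma minor4E a b c d :
  minor4 a b c d = det4 (fun i => A (inord i) a) (fun i => A (inord i) b)
                        (fun i => A (inord i) c) (fun i => A (inord i) d).
Proof.
rewrite /det4 -det4_expandE; congr (\det _); apply/matrixP => i k; rewrite !mxE.
by case: k => [[|[|[|[|//]]]] ?]; rewrite /= inord_val.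
Qed.

Lemma minor4_swap23 a b c d : minor4 a c b d = - minor4 a b c d.
Proof. by rewrite !minor4E det4_swap23. Qed.

Lemma minor4_swap34 a b c d : minor4 a b d c = - minor4 a b c d.
Proof. by rewrite !minor4E det4_swap34. Qed.

Lemma minor4_Pluecker a b c d e f :
  minor4 a b c d * minor4 a b e f - minor4 a b c e * minor4 a b d f
  + minor4 a b c f * minor4 a b d e = 0.
Proof. by rewrite !minor4E det4_Pluecker. Qed.

End Minor4.

Section SigmaBIdeal.
Variable R : realType.

Lemma sigmaB_in_ideal s : in_ideal_sigmaB (sigmaB R s).
Proof.
exists (fun t => (if t == s then 1 else 0 : CC R)%:MP); split=> [t|].
  exact: ba_const.
rewrite (bigD1 s) //= eqxx rmorph1 mul1r big1 ?addr0 // => t /negbTE ->.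
by rewrite rmorph0 mul0r.
Qed.

Lemma in_ideal_sigmaBD (p q : PR R) :
  in_ideal_sigmaB p -> in_ideal_sigmaB q -> in_ideal_sigmaB (p + q).
Proof.
move=> [r [r_alg ->]] [r' [r'_alg ->]]; exists (fun s => r s + r' s); split.
  by move=> s; apply: ba_add.
by rewrite -big_split; apply: eq_bigr => s _; rewrite mulrDl.
Qed.

Lemma in_ideal_sigmaBMl (c p : PR R) :
  in_bracket_alg c -> in_ideal_sigmaB p -> in_ideal_sigmaB (c * p).
Proof.
move=> c_alg [r [r_alg ->]]; exists (fun s => c * r s); split.
  by move=> s; apply: ba_mul.
by rewrite mulr_sumr; apply: eq_bigr => s _; rewrite mulrA.
Qed.

Lemma in_ideal_sigmaBB (p q : PR R) :
  in_ideal_sigmaB p -> in_ideal_sigmaB q -> in_ideal_sigmaB (p - q).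
Proof.
move=> Ip Iq; rewrite -mulN1r -(rmorph1 (@mpolyC _ (CC R))) -rmorphN.
by apply: in_ideal_sigmaBD => //; apply: in_ideal_sigmaBMl => //; exact: ba_const.
Qed.

Lemma bracketE a b c d : bracket R a b c d = minor4 (Defs.genmx R) a b c d.
Proof. by []. Qed.

#[local] Hint Extern 0 (is_true (_ != _)) => by rewrite -val_eqE /= !inordK : core.

Definition B345 (x y z : 'I_6) : PR R :=
  bracket R l0 l1 l2 z * bracket R l0 l2 x y * bracket R l1 x y z
  - bracket R l0 l1 l2 y * bracket R l2 x y z * bracket R l0 l1 x z.

Lemma sigmaB_B345 (s : 'S_6) x y z :
  s l0 = l0 -> s l1 = l1 -> s l2 = l2 -> s l3 = x -> s l4 = y -> s l5 = z ->
  sigmaB R s = B345 x y z.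
Proof. by rewrite /sigmaB => -> -> -> -> -> ->. Qed.

Lemma sigmaB_combination :
  sigmaB R (tperm l3 l4) + sigmaB R (tperm l3 l4 * tperm l4 l5)%g - sigmaB R 1
  - sigmaB R (tperm l4 l5)
  = 3%:R * (bracket R l0 l1 l2 l3 * bracket R l0 l1 l4 l5 * bracket R l2 l3 l4 l5).
Proof.
rewrite (@sigmaB_B345 _ l4 l3 l5). rewrite (@sigmaB_B345 _ l5 l3 l4).
rewrite (@sigmaB_B345 _ l3 l4 l5). rewrite (@sigmaB_B345 _ l3 l5 l4).
(* In the composite (34)(45) the inner transposition must be evaluated first. *)
all: try by rewrite ?perm1 ?permM ?(tpermL l3) ?(tpermR l3) ?(@tpermD _ l3) ?tpermL ?tpermR ?tpermD.
rewrite /B345 !bracketE; set A := Defs.genmx R.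
rewrite (minor4_swap34 A l0 l2 l3 l4) (minor4_swap23 A l1 l3 l4 l5) (minor4_swap23 A l2 l3 l4 l5).
rewrite (minor4_swap34 A l0 l2 l3 l5) (minor4_swap23 A l1 l3 l5 l4) (minor4_swap23 A l2 l3 l5 l4).
rewrite (minor4_swap34 A l1 l3 l4 l5) (minor4_swap34 A l2 l3 l4 l5) (minor4_swap34 A l0 l1 l4 l5).
have := minor4_Pluecker A l0 l1 l2 l3 l4 l5.
(* Generalizing the brackets keeps [ring] from unfolding the determinants. *)
move: (minor4 A l0 l1 l2 l3) (minor4 A l0 l1 l4 l5) (minor4 A l2 l3 l4 l5) (minor4 A l0 l1 l2 l4)
  (minor4 A l0 l1 l3 l5) (minor4 A l0 l1 l2 l5) (minor4 A l0 l1 l3 l4) (minor4 A l0 l2 l3 l4)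
  (minor4 A l0 l2 l3 l5) (minor4 A l1 l3 l4 l5)
  => x0123 x0145 x2345 x0124 x0135 x0125 x0134 x0234 x0235 x1345 GP.
apply/eqP; rewrite -subr_eq0; apply/eqP.
transitivity (- x2345 * (x0123 * x0145 - x0124 * x0135 + x0125 * x0134)); first by ring.
by rewrite GP mulr0.
Qed.

Lemma in_ideal_sigmaB_target :
  in_ideal_sigmaB (bracket R l0 l1 l2 l3 * bracket R l0 l1 l4 l5 * bracket R l2 l3 l4 l5).
Proof.
set t := _ * _ * _.
have -> : t = (3%:R^-1 : CC R)%:MP * (3%:R * t).
  by rewrite mulrA -(rmorph_nat (@mpolyC _ (CC R))) -rmorphM mulVf ?pnatr_eq0 // rmorph1 mul1r.
apply: in_ideal_sigmaBMl; first exact: ba_const.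
rewrite -sigmaB_combination.
apply: in_ideal_sigmaBB (sigmaB_in_ideal _); apply: in_ideal_sigmaBB (sigmaB_in_ideal _).
exact: in_ideal_sigmaBD (sigmaB_in_ideal _) (sigmaB_in_ideal _).
Qed.

End SigmaBIdeal.

Section Evaluation.
Variables (R : realType) (M : 'M[CC R]_(4, 6)).

Lemma evalM_bracket a b c d : evalM M (bracket R a b c d) = minor4 M a b c d.
Proof.
rewrite /evalM /bracket -det_map_mx; congr (\det _).
by apply/matrixP => i k; rewrite !mxE; apply: etrans (mevalXU _ _) _; exact: mxvecE.
Qed.

Lemma evalM_in_ideal_sigmaB (p : PR R) :
  in_ideal_sigmaB p -> (forall s, evalM M (sigmaB R s) = 0) -> evalM M p = 0.
Proof.
move=> [r [_ ->]] vanish.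
transitivity (\sum_s evalM M (r s) * evalM M (sigmaB R s)).
  by rewrite /evalM raddf_sum; apply: eq_bigr => s _; exact: mevalM.
by rewrite big1 // => s _; rewrite vanish mulr0.
Qed.

Lemma skew_lines_minor4 a b c d : skew_lines M a b c d -> minor4 M a b c d != 0.
Proof.
case=> ab_line [cd_line meet0].
have -> : minor4 M a b c d = \det (col_mx (linemx M a b) (linemx M c d))^T.
  congr (\det _); apply/matrixP => i k; rewrite !mxE.
  by case: k => [[|[|[|[|//]]]] ?]; case: splitP => -[[|[|//]] ?] //= _; rewrite ?mxE.
rewrite det_tr -unitfE -unitmxE -row_free_unit /row_free.
have := mxrank_sum_cap (linemx M a b) (linemx M c d).
by rewrite meet0 mxrank0 addn0 ab_line cd_line addsmxE => ->.
Qed.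

Lemma evalM_bracket_neq0 a b c d :
  skew_lines M a b c d -> evalM M (bracket R a b c d) != 0.
Proof. by rewrite evalM_bracket; exact: skew_lines_minor4. Qed.

End Evaluation.

Theorem mainTheorem5 (R : realType) :
  in_ideal_sigmaB (bracket R l0 l1 l2 l3 * bracket R l0 l1 l4 l5 * bracket R l2 l3 l4 l5)
  /\
  (forall M : 'M[CC R]_(4, 6),
     skew_lines M l0 l1 l2 l3 -> skew_lines M l0 l1 l4 l5 -> skew_lines M l2 l3 l4 l5 ->
     exists s : 'S_6, evalM M (sigmaB R s) != 0).
Proof.
split; first exact: in_ideal_sigmaB_target.
move=> M skew0123 skew0145 skew2345; apply/existsP; apply: contraT.
rewrite negb_exists => /forallP vanish.
have : evalM M (bracket R l0 l1 l2 l3 * bracket R l0 l1 l4 l5 * bracket R l2 l3 l4 l5) != 0.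
  by rewrite /evalM 2!mevalM !mulf_neq0 ?evalM_bracket_neq0.
by rewrite (evalM_in_ideal_sigmaB (in_ideal_sigmaB_target R)) ?eqxx // => s; exact/eqP/negbNE.
Qed.
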